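(* $$c_{2r}(1,\beta,0)=\frac{1}{2^{2r}(2r)!}\prod_{i=1}^r\big(1-(2i-1)^2\beta\big).$$
   Context: Fix an integer $r\ge1$ and indeterminates $\alpha,\beta,\gamma$. Define polynomials $c_n=c_n(\alpha,\beta,\gamma)\in\mathbb{Q}[\alpha,\beta,\gamma]$ by $c_n=0$ for $n<0$, $c_0=1$, and for every integer $n\ge-3$, $$(n+4)c_{n+4}+(2n+6-r)\alpha c_{n+3}+\left[(n+2-r)\alpha^2+(2n+5-2r)\frac{\alpha^2-\beta}{4}\right]c_{n+2}+\left[(2n+3-3r)\alpha\frac{\alpha^2-\beta}{4}+\frac{\gamma}{2}\right]c_{n+1}+\frac{1}{16}(\alpha^2-\beta)^2(n+1-2r)c_n=0.$$ $c_{2r}(1,\beta,0)\in\mathbb{Q}[\beta]$ denotes $c_{2r}$ with $\alpha=1$, $\gamma=0$. *)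

From HB Require Import structures.
From mathcomp Require Import all_boot all_order all_algebra.
Set Implicit Arguments. Unset Strict Implicit. Unset Printing Implicit Defensive.
Import Order.TTheory GRing.Theory Num.Theory.
Local Open Scope ring_scope.

(* Taking
   R = Q[alpha,beta,gamma] with the indeterminates gives the paper's c_n;
   specializing (alpha,beta,gamma) to (1, 'X, 0) in R = {poly rat} gives
   c_n(1,beta,0) in Q[beta] (the recurrence is preserved by the Q-algebra
   morphism Q[alpha,beta,gamma] -> Q[beta]).

   c_state m = (c_m, c_{m-1}, c_{m-2}, c_{m-3}) (zeros for negative indices). *)
Section CSeq.
Variables (R : comAlgType rat) (r : nat) (a b g : R).

Definition zR (z : int) : R := z%:~R.

Definition c_next (m : nat) (x1 x2 x3 x4 : R) : R :=
  - ((m%:R : rat)^-1) *: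
    (  zR (2 * m%:Z - 2 - r%:Z) * a * x1
     + (zR (m%:Z - 2 - r%:Z) * a ^+ 2
        + ((1 / 4 : rat) *: (zR (2 * m%:Z - 3 - 2 * r%:Z) * (a ^+ 2 - b)))) * x2
     + ((1 / 4 : rat) *: (zR (2 * m%:Z - 5 - 3 * r%:Z) * a * (a ^+ 2 - b))
        + (1 / 2 : rat) *: g) * x3
     + (1 / 16 : rat) *: ((a ^+ 2 - b) ^+ 2 * zR (m%:Z - 3 - 2 * r%:Z)) * x4).

Fixpoint c_state (m : nat) : R * R * R * R :=
  match m with
  | 0%N => (1, 0, 0, 0)
  | m'.+1 =>
      let '(x1, x2, x3, x4) := c_state m' in
      (c_next m'.+1 x1 x2 x3 x4, x1, x2, x3)
  end.

Definition cseq (m : nat) : R := (c_state m).1.1.1.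
End CSeq.

From HB Require Import structures.
From mathcomp Require Import all_boot all_order all_algebra.
From mathcomp Require Import ring zify.
Import Order.TTheory GRing.Theory Num.Theory.
Local Open Scope ring_scope.

(* Put alpha = 1, gamma = 0 and delta = (1 - beta)/4, and index sequences by
   int, zero at negative indices.  The recurrence operator of c factors as
   mul_quad \o reduced_op, where mul_quad is multiplication of the generating
   series by 1 + x + delta x^2 and reduced_op is the three-term operator
     i s_i + (i - 1 - r) s_(i-1) + delta (i - 1 - 2r) s_(i-2).
   As mul_quad is injective on sequences vanishing at negative indices,
   reduced_op annihilates c^(r).  Moreover reduced_op at r + 1 composed with
   mul_quad is the recurrence operator at r, so c^(r+1) = mul_quad c^(r) by
   uniqueness.  Reading reduced_op at 2r + 1 (where the s_(i-2) coefficient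
   vanishes) and at 2r + 2 gives
     4 (2r+1) (2r+2) c^(r+1)_(2r+2) = (1 - (2r+1)^2 beta) c^(r)_(2r),
   and the product formula follows by induction on r. *)


Section AlphaOneGammaZero.
Variables (R : comAlgType rat) (b : R).

Definition delta : R := (1 / 4 : rat) *: (1 - b).

Lemma mul4_delta : 4 * delta = 1 - b.
Proof.
by rewrite /delta -scalerAr mulr_natl -scaler_nat scalerA mul1r mulfV // scale1r.
Qed.

Definition cz (r : nat) (i : int) : R :=
  if i is Posz n then cseq r 1 b 0 n else 0.

Lemma cz_lt0 r (i : int) : i < 0 -> cz r i = 0.
Proof. by case: i. Qed.

Definition rec_tail (r : nat) (i : int) (x1 x2 x3 x4 : R) : R :=
  (2 * i - 2 - r%:Z)%:~R * x1
  + ((i - 2 - r%:Z)%:~R + (2 * i - 3 - 2 * r%:Z)%:~R * delta) * x2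
  + (2 * i - 5 - 3 * r%:Z)%:~R * delta * x3
  + (i - 3 - 2 * r%:Z)%:~R * delta ^+ 2 * x4.

Definition rec_op (r : nat) (s : int -> R) (i : int) : R :=
  i%:~R * s i + rec_tail r i (s (i - 1)) (s (i - 2)) (s (i - 3)) (s (i - 4)).

Definition reduced_op (r : nat) (s : int -> R) (i : int) : R :=
  i%:~R * s i + (i - 1 - r%:Z)%:~R * s (i - 1)
  + (i - 1 - 2 * r%:Z)%:~R * delta * s (i - 2).

Definition mul_quad (s : int -> R) (i : int) : R :=
  s i + s (i - 1) + delta * s (i - 2).

Lemma rec_opE r s i : rec_op r s i = mul_quad (reduced_op r s) i.
Proof.
rewrite /rec_op /rec_tail /mul_quad /reduced_op.
have -> : i - 1 - 1 = i - 2 by ring. have -> : i - 1 - 2 = i - 3 by ring.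
have -> : i - 2 - 1 = i - 3 by ring. have -> : i - 2 - 2 = i - 4 by ring.
ring.
Qed.

Lemma reduced_op_mul_quad r s i :
  reduced_op r.+1 (mul_quad s) i = rec_op r s i.
Proof.
rewrite /rec_op /rec_tail /mul_quad /reduced_op intS.
have -> : i - 1 - 1 = i - 2 by ring. have -> : i - 1 - 2 = i - 3 by ring.
have -> : i - 2 - 1 = i - 3 by ring. have -> : i - 2 - 2 = i - 4 by ring.
ring.
Qed.

Lemma c_nextE r (m : nat) x1 x2 x3 x4 :
  c_next r 1 b 0 m x1 x2 x3 x4 = - (m%:R : rat)^-1 *: rec_tail r m x1 x2 x3 x4.
Proof.
rewrite /c_next /rec_tail /zR /delta; congr (_ *: _).
rewrite expr1n !mulr1 scaler0 addr0 exprZn !scalerAr.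
have -> : (1 / 4 : rat) ^+ 2 = 1 / 16 by apply/eqP.
by congr (_ + _ * _); rewrite -!scalerAr; congr (_ *: _); ring.
Qed.

Lemma c_state_cz r (m : nat) :
  c_state r 1 b 0 m = (cz r m, cz r (m%:Z - 1), cz r (m%:Z - 2), cz r (m%:Z - 3)).
Proof.
elim: m => [//|m IH].
have -> : m.+1%:Z - 1 = m by lia.
have -> : m.+1%:Z - 2 = m%:Z - 1 by lia.
have -> : m.+1%:Z - 3 = m%:Z - 2 by lia.
by rewrite /= IH /cz /cseq /= IH.
Qed.

Lemma cz_rec r (m : nat) :
  cz r m.+1 = c_next r 1 b 0 m.+1 (cz r (m.+1%:Z - 1)) (cz r (m.+1%:Z - 2))
                (cz r (m.+1%:Z - 3)) (cz r (m.+1%:Z - 4)).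
Proof.
have -> : m.+1%:Z - 1 = m by lia.
have -> : m.+1%:Z - 2 = m%:Z - 1 by lia.
have -> : m.+1%:Z - 3 = m%:Z - 2 by lia.
have -> : m.+1%:Z - 4 = m%:Z - 3 by lia.
by rewrite /cz /cseq /= c_state_cz.
Qed.

Lemma rec_op_eq0 r s (m : nat) : m != 0%N ->
  (rec_op r s m == 0) =
  (s m == c_next r 1 b 0 m (s (m%:Z - 1)) (s (m%:Z - 2)) (s (m%:Z - 3)) (s (m%:Z - 4))).
Proof.
move=> m0; rewrite c_nextE /rec_op addr_eq0 -pmulrn mulr_natl -scaler_nat.
have m0' : (m%:R : rat) != 0 by rewrite pnatr_eq0.
rewrite scaleNr -scalerN; apply/eqP/eqP => [<-|->].
  by rewrite scalerA mulVf ?scale1r.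
by rewrite scalerA mulfV ?scale1r.
Qed.

Lemma int_strong_ind (P : int -> Prop) :
  (forall i, i < 0 -> P i) -> (forall n : nat, (forall j, j < n%:Z -> P j) -> P n) ->
  forall i, P i.
Proof.
move=> Pneg Pnat; case=> [n|n]; last exact: Pneg.
elim/ltn_ind: n => n IH; apply: Pnat; case=> [m|m] lt_mn; last exact: Pneg.
by apply: IH; lia.
Qed.

Lemma rec_op_cz r i : rec_op r (cz r) i = 0.
Proof.
case: i => [[|m]|n].
- by rewrite /rec_op /rec_tail ![cz r (_ - _)]cz_lt0 // mul0r !mulr0 !addr0.
- by apply/eqP; rewrite rec_op_eq0 // -cz_rec.
- by rewrite /rec_op /rec_tail !cz_lt0 ?mulr0 ?addr0 //; lia.
Qed.

Lemma mul_quad_eq0 (t : int -> R) : (forall i, i < 0 -> t i = 0) ->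
  (forall i, mul_quad t i = 0) -> forall i, t i = 0.
Proof.
move=> tneg tM; apply: int_strong_ind => // n IH.
have := tM n; rewrite /mul_quad ![t (_ - _)]IH ?mulr0 ?addr0 //; lia.
Qed.

Lemma reduced_op_cz r i : reduced_op r (cz r) i = 0.
Proof.
apply: mul_quad_eq0 => [{}i i_lt0|{}i]; last by rewrite -rec_opE rec_op_cz.
by rewrite /reduced_op !cz_lt0 ?mulr0 ?addr0 //; lia.
Qed.

Lemma rec_op_uniq r (s : int -> R) : (forall i, i < 0 -> s i = 0) -> s 0 = 1 ->
  (forall i, rec_op r s i = 0) -> forall i, s i = cz r i.
Proof.
move=> sneg s0 sR; apply: int_strong_ind => [i /[dup] /sneg -> /cz_lt0 -> //|].
case=> [|m] IH; first by rewrite s0.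
have /eqP := sR m.+1; rewrite rec_op_eq0 // => /eqP ->.
by rewrite cz_rec !IH //; lia.
Qed.

Lemma cz_succ r i : cz r.+1 i = mul_quad (cz r) i.
Proof.
symmetry; apply: rec_op_uniq => {i} [i i_lt0||i].
- by rewrite /mul_quad !cz_lt0 ?mulr0 ?addr0 //; lia.
- by rewrite /mul_quad ![cz r (_ - _)]cz_lt0 // mulr0 !addr0.
- rewrite rec_opE [mul_quad (reduced_op _ _) _]/mul_quad.
  by rewrite !reduced_op_mul_quad !rec_op_cz mulr0 !addr0.
Qed.

Lemma cz_diag_step k :
  (4 * (2 * k + 1) * (2 * k + 2))%:R * cz k.+1 (2 * k.+1)%N =
  (1 - ((2 * k + 1) ^ 2)%:R *: b) * cz k (2 * k)%N.
Proof.
set n := (2 * k)%:Z.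
have -> : (2 * k.+1)%N = n + 2 :> int by rewrite /n; lia.
have E2 := reduced_op_cz k (n + 2); have E1 := reduced_op_cz k (n + 1).
move: E2 E1; rewrite cz_succ /mul_quad /reduced_op.
have -> : n + 2 - 1 = n + 1 by ring. have -> : n + 2 - 2 = n by ring.
have -> : n + 1 - 1 = n by ring. have -> : n + 1 - 2 = n - 1 by ring.
set A := cz k n; set B := cz k (n + 1); set C := cz k (n + 2); set D := cz k (n - 1).
move=> E2 E1; apply/eqP; rewrite -subr_eq0 scaler_nat.
have -> : (4 * (2 * k + 1) * (2 * k + 2))%:R * (C + B + delta * A)
          - (1 - b *+ (2 * k + 1) ^ 2) * A =
  4 * (2 * k + 1)%:R * ((n + 2)%:~R * C + (n + 1 - k%:Z)%:~R * B
                        + (n + 1 - 2 * k%:Z)%:~R * delta * A)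
  + 4 * (k + 1)%:R * ((n + 1)%:~R * B + (n - k%:Z)%:~R * A
                      + (n - 2 * k%:Z)%:~R * delta * D)
  + ((2 * k + 1) ^ 2)%:R * (4 * delta - (1 - b)) * A.
  by rewrite /n; ring.
by rewrite E2 E1 mul4_delta subrr !mulr0 mul0r !addr0.
Qed.

Lemma cz_diag r :
  ((2 ^ (2 * r) * (2 * r)`!)%:R : rat) *: cz r (2 * r)%N =
  \prod_(1 <= i < r.+1) (1 - ((2 * i - 1) ^ 2)%:R *: b).
Proof.
elim: r => [|k IH]; first by rewrite big_geq // scale1r.
have -> : (2 ^ (2 * k.+1) * (2 * k.+1)`! =
           2 ^ (2 * k) * (2 * k)`! * (4 * (2 * k + 1) * (2 * k + 2)))%N.
  by rewrite (_ : (2 * k.+1 = (2 * k).+2)%N) ?factS ?expnS; [ring | lia].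
rewrite natrM -scalerA [X in _ *: X]scaler_nat -[cz _ _ *+ _]mulr_natl.
rewrite cz_diag_step scalerAr IH.
rewrite [in RHS]big_nat_recr //= mulrC; congr (_ * _).
by rewrite (_ : (2 * k.+1 - 1 = 2 * k + 1)%N) //; lia.
Qed.

End AlphaOneGammaZero.

Theorem lemma4p4 (r : nat) (hr : (1 <= r)%N) :
  cseq r 1 'X 0 (2 * r) =
  ((2 ^ (2 * r) * (2 * r)`!)%:R : rat)^-1 *:
    \prod_(1 <= i < r.+1) (1 - ((2 * i - 1) ^ 2)%:R *: 'X : {poly rat}).
Proof.
rewrite -(@cz_diag _ 'X) scalerA mulVf ?scale1r //.
by rewrite pnatr_eq0 muln_eq0 negb_or expn_eq0 -!lt0n fact_gt0.
Qed.
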